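(* Let $C_s$ be a generalized sequential choice rule with categories $1,\dots,K$ as described in the context, and let $X^M=(x^1,\dots,x^M)$ be an observable offer process for $s$. For every $m\in\{1,\dots,M\}$ and every category $k\in\{1,\dots,K\}$ (with $X^0=\emptyset$): 1. $C_k(H_k(X^{m-1});q_k^{m-1})\subseteq H_k(X^m)$; 2. $C_k(F_k(X^m);q_k^m)\subseteq C_k(H_k(X^{m-1});q_k^{m-1})\cup[H_k(X^m)\setminus H_k(X^{m-1})]$; 3. $C_k(H_k(X^m);q_k^m)=C_k(F_k(X^m);q_k^m)$; 4. $q_k^{m-1}\ge q_k^m$; 5. $R_k(F_k(X^{m-1});q_k^{m-1})\subseteq R_k(F_k(X^m);q_k^m)$.
   Context: Contracts: a finite set $X$; each $x\in X$ has an individual $\mathbf{i}(x)$ and an institution $\mathbf{s}(x)$; $X_s=\{x:\mathbf{s}(x)=s\}$, $\mathbf{i}(Y)=\{\mathbf{i}(x):x\in Y\}$, and $Y_i$ is the set of contracts of $i$ in $Y$. Generalized sequential choice rule $C_s$: there are ordered categories $1,\dots,K$. Each category $k$ has a choice rule $C_k(\cdot\,;q):2^{X_s}\to 2^{X_s}$ for every capacity $q\in\mathbb{Z}_+$, with $C_k(Y;q)\subseteq Y$, choosing at most one contract per individual, such that for each fixed $q$: (substitutes) for all $x,y$ and $Z$, $y\notin C_k(Z\cup\{y\};q)$ implies $y\notin C_k(Z\cup\{x,y\};q)$; (size monotonicity) $|C_k(Z;q)|\le|C_k(Z\cup\{x\};q)|$; and (quota monotonicity) $C_k(Y;q)\subseteq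 C_k(Y;q+1)$ and $|C_k(Y;q+1)|-|C_k(Y;q)|\le1$ for all $Y$. Given $Y\subseteq X_s$, the rule is computed sequentially: $H_1(Y)=Y$ and $q_1$ is an exogenous capacity; for $k\ge1$, $r_k=q_k-|C_k(H_k(Y);q_k)|$ is the unused capacity of category $k$; $q_k=q_k(r_1,\dots,r_{k-1})$ for $k\ge2$, where each transfer function $q_k(\cdot)$ is weakly increasing in each argument (monotone transfer policy); $H_k(Y)=\{y\in Y:\mathbf{i}(y)\notin\mathbf{i}(\bigcup_{k'<k}C_{k'}(H_{k'}(Y);q_{k'}))\}$ is the set of contracts available to category $k$. Then $C_s(Y)=\bigcup_{k}C_k(H_k(Y);q_k)$. Write $R_k(Y;q)=Y\setminus C_k(Y;q)$. Offer process: a finite sequence of distinct contracts $(x^1,\dots,x^M)$ in $X_s$; it is observable if for every $m$, $\mathbf{i}(x^m)\notin\mathbf{i}(C_s(\{x^1,\dots,x^{m-1}\}))$. Write $X^m=\{x^1,\dots,x^m\}$ and $X^0=\emptyset$. $H_k(X^m)$ denotes the set of contracts available to category $k$ in the computation of $C_s(X^m)$, $q_k^m$ the capacity of category $k$ in that computation (so $q_k^m=q_k(\tilde r_1,\dots,\tilde r_{k-1})$ with the unused capacities $\tilde r$ of that computation, and $q_1^m=q_1$), and $F_k(X^m)=\bigcup_{n\le m}H_k(X^n)$. *)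

From mathcomp Require Import all_boot all_order all_algebra.
Set Implicit Arguments.
Unset Strict Implicit.
Unset Printing Implicit Defensive.

(* The contract type T plays the role of X_s (the contracts of the fixed
   institution s); ind plays the role of the individual map i(.).
   Categories are indexed 0,...,K-1 (category k of the paper is index k-1). *)

Section GSC.
Variables (T : finType) (I : eqType) (ind : T -> I).

Definition one_per_individual (Y : {set T}) : Prop :=
  forall x y, x \in Y -> y \in Y -> ind x = ind y -> x = y.

Definition category_rule (C : {set T} -> nat -> {set T}) : Prop :=
  forall q : nat,
  [/\ (forall Y, C Y q \subset Y),
      (forall Y, one_per_individual (C Y q)),
      (forall (x y : T) (Z : {set T}),
          y \notin C (y |: Z) q -> y \notin C (x |: (y |: Z)) q),
      (forall (x : T) (Z : {set T}), #|C Z q| <= #|C (x |: Z) q|) &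
      (forall Y, C Y q \subset C Y q.+1 /\ #|C Y q.+1| <= #|C Y q| + 1)].

(* Monotone transfer policy: qf k [:: r_1; ...; r_(k)] is the capacity of
   (0-indexed) category k given the unused capacities of earlier categories;
   qf 0 [::] is the exogenous capacity q_1. *)
Definition monotone_transfer (qf : nat -> seq int -> nat) : Prop :=
  forall k (rs rs' : seq int), size rs = k ->
    all2 (fun a b => (a <= b)%R) rs rs' -> qf k rs <= qf k rs'.

Variables (Ck : nat -> {set T} -> nat -> {set T}) (qf : nat -> seq int -> nat).

Definition avail (U Y : {set T}) : {set T} :=
  [set y in Y | ~~ [exists u in U, ind u == ind y]].

(* run k Y = (union of the sets chosen by categories 0..k-1,
              [:: r_1; ...; r_k] unused capacities) *)
Fixpoint run (k : nat) (Y : {set T}) : {set T} * seq int :=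
  match k with
  | 0 => (set0, [::])
  | k'.+1 =>
      let: (U, rs) := run k' Y in
      let q := qf k' rs in
      let C := Ck k' (avail U Y) q in
      (U :|: C, rcons rs (q%:Z - (#|C|)%:Z)%R)
  end.

Definition Hk (k : nat) (Y : {set T}) : {set T} := avail (run k Y).1 Y.
Definition qk (k : nat) (Y : {set T}) : nat := qf k (run k Y).2.
Definition Cs (K : nat) (Y : {set T}) : {set T} := (run K Y).1.

Definition Rk (k : nat) (Y : {set T}) (q : nat) : {set T} := Y :\: Ck k Y q.

Definition Xpre (xs : seq T) (m : nat) : {set T} := [set x in take m xs].

Definition Fk (k : nat) (xs : seq T) (m : nat) : {set T} :=
  \bigcup_(n < m.+1) Hk k (Xpre xs n).

Definition observable (K : nat) (xs : seq T) : Prop :=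
  uniq xs /\
  forall (m : nat) (x0 : T), m < size xs ->
    ~~ [exists y in Cs K (Xpre xs m), ind y == ind (nth x0 xs m)].

End GSC.

From mathcomp Require Import all_boot all_order all_algebra.
From mathcomp Require Import zify.
Set Implicit Arguments.
Unset Strict Implicit.

(* Substitutability and size monotonicity, extended from one added contract
   to arbitrary supersets, give irrelevance of rejected contracts: a category
   facing F_k(X^m) chooses exactly what it chooses from H_k(X^m) as soon as its
   choice from F_k(X^m) lies in H_k(X^m).  The five claims are then proved for
   X^(m+1) by induction on the category k, assuming claim 3 for X^m: claim 2 for
   the earlier categories and observability give claim 1, capacities can only
   shrink because every unused capacity r_j weakly decreases (quota
   monotonicity), claim 2 follows by substitutability, and claim 1 together
   with claim 2 puts the choice from F_k(X^(m+1)) inside H_k(X^(m+1)), which by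
   irrelevance of rejected contracts is claim 3 for X^(m+1). *)

Lemma superset_ind (T : finType) (Z : {set T}) (P : {set T} -> Prop) :
  P Z -> (forall (W : {set T}) a, Z \subset W -> P W -> P (a |: W)) ->
  forall Z' : {set T}, Z \subset Z' -> P Z'.
Proof.
move=> PZ PS Z'; move: {2}#|Z' :\: Z| (erefl #|Z' :\: Z|) => n.
elim: n Z' => [|n IH] Z' cardD sZ.
  suff -> : Z' = Z by [].
  by apply/eqP; rewrite eqEsubset -setD_eq0 -cards_eq0 cardD eqxx.
have [a aD] : exists a, a \in Z' :\: Z by apply/set0Pn; rewrite -cards_eq0 cardD.
move: (aD); rewrite inE => /andP [aZ aZ'].
rewrite -(setD1K aZ'); apply: PS; first by rewrite subsetD1 sZ.
apply: IH; last by rewrite subsetD1 sZ.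
by rewrite setDDl setUC -setDDl; move: cardD; rewrite (cardsD1 a) aD => -[].
Qed.

Section OneCategory.
Variables (T : finType) (I : eqType) (ind : T -> I).
Variable C : {set T} -> nat -> {set T}.
Hypothesis HC : category_rule ind C.

Lemma choice_sub Y q : C Y q \subset Y.
Proof. by case: (HC q). Qed.

Lemma notin_choice_superset q (Z Z' : {set T}) y :
  Z \subset Z' -> y \in Z -> y \notin C Z q -> y \notin C Z' q.
Proof.
move=> sZ yZ yC; case: (HC q) => _ _ subst _ _.
apply: (superset_ind (P := fun W => y \notin C W q)) sZ => // W a sW yW.
have yWW : y |: W = W by apply/setUidPr; rewrite sub1set (subsetP sW).
by rewrite -yWW; apply: subst; rewrite yWW.
Qed.

Lemma card_choice_superset q (Z Z' : {set T}) :
  Z \subset Z' -> #|C Z q| <= #|C Z' q|.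
Proof.
case: (HC q) => _ _ _ sizeC _.
apply: (superset_ind (P := fun W => #|C Z q| <= #|C W q|)) => // W a _.
by move/leq_trans; apply.
Qed.

Lemma choice_setU1_rejected q (W : {set T}) a :
  a \notin C (a |: W) q -> C (a |: W) q = C W q.
Proof.
move=> aC; apply/eqP; rewrite eqEcard card_choice_superset ?subsetUr // andbT.
apply/subsetP=> z zC; apply: contraT => zWC.
have zW : z \in W.
  move: (subsetP (choice_sub _ _) _ zC); rewrite in_setU1.
  by case: eqP zC aC => [-> -> //|_ _ _].
by move: zC; rewrite (negbTE (notin_choice_superset (subsetUr [set a] W) zW zWC)).
Qed.

Lemma choice_irc q (Z Z' : {set T}) :
  C Z' q \subset Z -> Z \subset Z' -> C Z q = C Z' q.
Proof.
move=> sCZ sZ; move: sZ sCZ.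
apply: (superset_ind (P := fun W => C W q \subset Z -> C Z q = C W q)) => //.
move=> W a sW IH sCZ.
have [aW|aW] := boolP (a \in W).
  have aWW : a |: W = W by apply/setUidPr; rewrite sub1set.
  by rewrite aWW in sCZ *; exact: IH.
have aC : a \notin C (a |: W) q.
  by apply: contra aW => /(subsetP sCZ) /(subsetP sW).
by rewrite (choice_setU1_rejected aC) in sCZ *; exact: IH.
Qed.

Lemma choice_quota_mono Y p q : p <= q -> C Y p \subset C Y q.
Proof.
move=> /subnK <-; elim: (q - p) => [|d IH] //.
by apply: subset_trans IH _; case: (HC (d + p)) => _ _ _ _ /(_ Y) [].
Qed.

Lemma card_choice_quota Y p q : p <= q -> #|C Y q| <= #|C Y p| + (q - p).
Proof.
move=> /subnK <-; rewrite addnK; elim: (q - p) => [|d IH]; first by rewrite addn0.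
by case: (HC (d + p)) => _ _ _ _ /(_ Y) [_ h]; rewrite addSn; lia.
Qed.

(* |C B p| >= |C B q| - (q - p), and |C B q| >= |C A q| because by
   irrelevance of rejected contracts C A q = C (A :&: B) q. *)
Lemma unused_capacity_mono (A B : {set T}) p q :
  p <= q -> C A q \subset B ->
  (p%:Z - (#|C B p|)%:Z <= q%:Z - (#|C A q|)%:Z)%R.
Proof.
move=> pq sAB.
have cardB := card_choice_quota B pq.
have cardA : #|C A q| <= #|C B q|.
  rewrite -(@choice_irc q (A :&: B) A) ?subsetIl //; last first.
    by rewrite subsetI sAB choice_sub.
  exact/card_choice_superset/subsetIr.
lia.
Qed.

End OneCategory.

Lemma all2_rcons (A B : Type) (r : A -> B -> bool) s t a b :
  size s = size t -> all2 r (rcons s a) (rcons t b) = all2 r s t && r a b.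
Proof.
elim: s t => [|x s IH] [|y t] //=; first by rewrite andbT.
by case=> /IH ->; rewrite andbA.
Qed.

Section SequentialRule.
Variables (T : finType) (I : eqType) (ind : T -> I).
Variables (Ck : nat -> {set T} -> nat -> {set T}) (qf : nat -> seq int -> nat).

Local Notation run := (run ind Ck qf).
Local Notation Hk := (Hk ind Ck qf).
Local Notation qk := (qk ind Ck qf).
Local Notation chosen k Y := (Ck k (Hk k Y) (qk k Y)).

Lemma run_fst k Y : (run k.+1 Y).1 = (run k Y).1 :|: chosen k Y.
Proof. by rewrite /Hk /qk /=; case: (run k Y). Qed.

Lemma run_snd k Y :
  (run k.+1 Y).2 = rcons (run k Y).2 ((qk k Y)%:Z - (#|chosen k Y|)%:Z)%R.
Proof. by rewrite /Hk /qk /=; case: (run k Y). Qed.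

Lemma size_run k Y : size (run k Y).2 = k.
Proof. by elim: k => [|k IH] //; rewrite run_snd size_rcons IH. Qed.

Lemma run_mono j k Y : j <= k -> (run j Y).1 \subset (run k Y).1.
Proof.
move=> /subnK <-; elim: (k - j) => [|d IH] //.
by rewrite addSn run_fst; apply: subset_trans IH (subsetUl _ _).
Qed.

Lemma chosen_sub_run j k Y : j < k -> chosen j Y \subset (run k Y).1.
Proof. by move=> jk; apply: subset_trans (run_mono Y jk); rewrite run_fst subsetUr. Qed.

Lemma mem_run k Y u :
  u \in (run k Y).1 -> exists2 j, j < k & u \in chosen j Y.
Proof.
elim: k => [|k IH]; first by rewrite inE.
rewrite run_fst inE => /orP [/IH [j jk uj]|uk]; last by exists k.
by exists j => //; exact: ltnW.
Qed.

Lemma mem_Hk k Y y :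
  (y \in Hk k Y) = (y \in Y) && ~~ [exists u in (run k Y).1, ind u == ind y].
Proof. by rewrite inE. Qed.

Lemma Xpre_S (xs : seq T) n x0 :
  n < size xs -> Xpre xs n.+1 = nth x0 xs n |: Xpre xs n.
Proof.
move=> nxs; rewrite /Xpre (take_nth x0 nxs); apply/setP=> z.
by rewrite !inE mem_rcons in_cons.
Qed.

Lemma Fk_S k xs n : Fk ind Ck qf k xs n.+1 = Fk ind Ck qf k xs n :|: Hk k (Xpre xs n.+1).
Proof. by rewrite /Fk big_ord_recr. Qed.

Lemma Fk_0 k xs : Fk ind Ck qf k xs 0 = Hk k (Xpre xs 0).
Proof. by rewrite /Fk big_ord1. Qed.

Lemma Hk_sub_Fk k xs n : Hk k (Xpre xs n) \subset Fk ind Ck qf k xs n.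
Proof. by case: n => [|n]; rewrite ?Fk_0 // Fk_S subsetUr. Qed.

Lemma Fk_sub_S k xs n : Fk ind Ck qf k xs n \subset Fk ind Ck qf k xs n.+1.
Proof. by rewrite Fk_S subsetUl. Qed.

Variables (K : nat) (xs : seq T).
Hypothesis HC : forall k, k < K -> category_rule ind (Ck k).
Hypothesis Hq : monotone_transfer qf.
Hypothesis Hobs : observable ind Ck qf K xs.

Local Notation H k n := (Hk k (Xpre xs n)).
Local Notation q k n := (qk k (Xpre xs n)).
Local Notation F k n := (Fk ind Ck qf k xs n).

Lemma chosen_available_S n k :
  n < size xs -> k < K ->
  (forall j, j < k -> chosen j (Xpre xs n.+1) \subset
                      chosen j (Xpre xs n) :|: (H j n.+1 :\: H j n)) ->
  chosen k (Xpre xs n) \subset H k n.+1.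
Proof.
move=> nxs kK earlier; apply/subsetP=> y yC.
move: (subsetP (choice_sub (HC kK) _ _) _ yC); rewrite mem_Hk => /andP [yX yfree].
have yCs : y \in Cs ind Ck qf K (Xpre xs n) by apply: (subsetP (chosen_sub_run _ kK)).
have taken_before u : u \in (run k (Xpre xs n)).1 -> ind u = ind y -> False.
  by move=> uR ui; move/existsP: yfree; apply; exists u; rewrite uR ui eqxx.
have yXS : y \in Xpre xs n.+1 by rewrite (Xpre_S y nxs) in_setU1 yX orbT.
rewrite mem_Hk yXS /=.
apply/existsP => -[u /andP [uR /eqP ui]].
have [j jk uC] := mem_run uR.
move: (subsetP (earlier j jk) _ uC); rewrite in_setU => /orP [uCn|].
  by apply: (taken_before u) => //; apply: (subsetP (chosen_sub_run _ jk)).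
rewrite in_setD !mem_Hk => /andP [uHn /andP [uXS _]].
move: uXS; rewrite (Xpre_S y nxs) in_setU1 => /orP [/eqP ux|uX].
  case: Hobs => _ /(_ n y nxs) /existsP; apply.
  by exists y; rewrite yCs -ui ux eqxx.
move: uHn; rewrite uX negbK => /existsP [w /andP [wR /eqP wi]].
by apply: (taken_before w); [apply: (subsetP (run_mono _ (ltnW jk))) | rewrite wi].
Qed.

Lemma choice_Fk_S n k :
  k < K -> q k n.+1 <= q k n -> chosen k (Xpre xs n) = Ck k (F k n) (q k n) ->
  Ck k (F k n.+1) (q k n.+1) \subset chosen k (Xpre xs n) :|: (H k n.+1 :\: H k n).
Proof.
move=> kK qle HF; apply/subsetP=> z zC.
have [zFn|zFn] := boolP (z \in F k n).
  rewrite inE HF (subsetP (choice_quota_mono (HC kK) _ qle)) //.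
  apply: contraT => zn.
  by move: zC; rewrite (negbTE (notin_choice_superset (HC kK) (Fk_sub_S k xs n) zFn zn)).
move: (subsetP (choice_sub (HC kK) _ _) _ zC); rewrite Fk_S inE (negbTE zFn) /= => zH.
by rewrite in_setU in_setD zH andbT (contra (subsetP (Hk_sub_Fk k xs n) z)) ?orbT.
Qed.

Lemma rejected_Fk_S n k :
  k < K -> q k n.+1 <= q k n ->
  Rk Ck k (F k n) (q k n) \subset Rk Ck k (F k n.+1) (q k n.+1).
Proof.
move=> kK qle; apply/subsetP=> z; rewrite /Rk !inE => /andP [zn zF].
rewrite (subsetP (Fk_sub_S k xs n)) // andbT.
apply: (notin_choice_superset (HC kK) (Fk_sub_S k xs n) zF).
by apply: contra zn; exact: (subsetP (choice_quota_mono (HC kK) _ qle)).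
Qed.

Definition offer_step_facts n j :=
  [/\ chosen j (Xpre xs n) \subset H j n.+1,
      Ck j (F j n.+1) (q j n.+1) \subset chosen j (Xpre xs n) :|: (H j n.+1 :\: H j n),
      chosen j (Xpre xs n.+1) = Ck j (F j n.+1) (q j n.+1) &
      q j n.+1 <= q j n].

(* Capacities are compared through the whole sequences of unused capacities,
   which decrease pointwise from X^n to X^(n+1). *)
Lemma offer_step n :
  n < size xs ->
  (forall k, k < K -> chosen k (Xpre xs n) = Ck k (F k n) (q k n)) ->
  forall k, k <= K ->
  (forall j, j < k -> offer_step_facts n j) /\
  all2 (fun a b => (a <= b)%R) (run k (Xpre xs n.+1)).2 (run k (Xpre xs n)).2.
Proof.
move=> nxs HF; elim=> [|k IH] kK; first by split.
have [IHfacts IHr] := IH (ltnW kK).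
have qle : q k n.+1 <= q k n by apply: Hq IHr; rewrite size_run.
have stays : chosen k (Xpre xs n) \subset H k n.+1.
  apply: chosen_available_S => // j jk; by case: (IHfacts j jk) => _ subj ->.
have sub2 := choice_Fk_S kK qle (HF k kK).
have eq3 : chosen k (Xpre xs n.+1) = Ck k (F k n.+1) (q k n.+1).
  apply: (choice_irc (HC kK)); last exact: Hk_sub_Fk.
  by apply: subset_trans sub2 _; rewrite subUset stays subsetDl.
split.
  by move=> j; rewrite ltnS leq_eqVlt => /orP [/eqP ->|/IHfacts].
rewrite !run_snd all2_rcons ?size_run // IHr /=.
exact: (unused_capacity_mono (HC kK) qle stays).
Qed.

Lemma choice_Hk_eq_Fk n k :
  n <= size xs -> k < K -> chosen k (Xpre xs n) = Ck k (F k n) (q k n).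
Proof.
elim: n k => [|n IH] k nxs kK; first by rewrite Fk_0.
have [facts _] := offer_step nxs (fun j => IH j (ltnW nxs)) (leqnn K).
by case: (facts k kK).
Qed.

End SequentialRule.

Theorem proposition3 (T : finType) (I : eqType) (ind : T -> I) (K : nat)
  (Ck : nat -> {set T} -> nat -> {set T}) (qf : nat -> seq int -> nat)
  (HC : forall k, k < K -> category_rule ind (Ck k))
  (Hq : monotone_transfer qf)
  (xs : seq T) (Hobs : observable ind Ck qf K xs) :
  forall m k, 1 <= m <= size xs -> k < K ->
  let H n := Hk ind Ck qf k (Xpre xs n) in
  let q n := qk ind Ck qf k (Xpre xs n) in
  let F n := Fk ind Ck qf k xs n in
  [/\ Ck k (H m.-1) (q m.-1) \subset H m,
      Ck k (F m) (q m) \subset Ck k (H m.-1) (q m.-1) :|: (H m :\: H m.-1),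
      Ck k (H m) (q m) = Ck k (F m) (q m),
      q m <= q m.-1 &
      Rk Ck k (F m.-1) (q m.-1) \subset Rk Ck k (F m) (q m)].
Proof.
move=> [//|n] k /andP [_ nxs] kK H q F /=.
have HF j := choice_Hk_eq_Fk HC Hq Hobs (k := j) (ltnW nxs).
have [facts _] := offer_step HC Hq Hobs nxs HF (leqnn K).
have [stays sub2 eq3 qle] := facts k kK.
by split=> //; exact: (rejected_Fk_S HC kK qle).
Qed.
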